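(* Let $q\ge1$, $(a,q)=1$, $X\ge2$ and $1\le h\le X$. Then $$J_{1,a,q}(X,h):=\int_0^h\Big|\sum_{n\le x}F(n)e^{-n/X}\Big|^2dx\ll H_{a,q}(h)+\frac{h}{\varphi^2(q)},$$ where $F(n)=\Lambda(n)\delta(n)-\frac{1}{\varphi(q)}+\frac{\widetilde\chi(a)}{\varphi(q)}n^{\widetilde\beta-1}$ and $H_{a,q}(y)=\int_0^y\Big(\psi(t,q,a)-\frac{t}{\varphi(q)}+\frac{\widetilde\chi(a)}{\varphi(q)}\frac{t^{\widetilde\beta}}{\widetilde\beta}\Big)^2dt$.
   Context: $\Lambda$ is the von Mangoldt function, $\varphi$ Euler's totient, $\delta(n)=1$ if $n\equiv a\pmod q$ and $0$ otherwise, $\psi(t,q,a)=\sum_{m\le t,\ m\equiv a (q)}\Lambda(m)$. $\widetilde\beta$ is the possible Siegel (exceptional) zero for modulus $q$, a real zero of $L(s,\widetilde\chi)$ for the exceptional real character $\widetilde\chi$ mod $q$ (at most one exists; if none, the terms involving $\widetilde\beta$ are absent). *)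

From Stdlib Require Import Reals ZArith Arith.
From Coquelicot Require Import Coquelicot.
From mathcomp Require Import ssreflect ssrbool ssrnat seq prime.
Set Implicit Arguments.
Open Scope R_scope.

Fixpoint sum1 (f : nat -> R) (N : nat) : R :=
  match N with
  | O => 0
  | S m => sum1 f m + f (S m)
  end.

(* floor of a real, as a nat (0 for negative reals) *)
Definition nfloor (x : R) : nat := Z.to_nat (Int_part x).

(* von Mangoldt: log p if n = p^k (k >= 1), 0 otherwise *)
Definition vonMangoldt (n : nat) : R :=
  match primes n with
  | [:: p] => ln (INR p)
  | _ => 0
  end.

Definition phiR (q : nat) : R := INR (totient q).

Definition congr (q : nat) (a : Z) (n : nat) : bool :=
  Z.eqb (Z.modulo (Z.of_nat n) (Z.of_nat q)) (Z.modulo a (Z.of_nat q)).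

Definition psi (t : R) (q : nat) (a : Z) : R :=
  sum1 (fun m => if congr q a m then vonMangoldt m else 0) (nfloor t).

(* real power t^b, t > 0 (set to 0 for t <= 0) *)
Definition rpow (t b : R) : R := if Rle_dec t 0 then 0 else Rpower t b.

Definition real_dirichlet_char (q : nat) (chi : nat -> R) : Prop :=
  (forall m n, chi (m * n)%nat = chi m * chi n) /\
  chi 1%nat = 1 /\
  (forall n, chi (n + q)%nat = chi n) /\
  (forall n, chi n = 0 <-> Nat.gcd n q <> 1%nat).

Definition nonprincipal (chi : nat -> R) : Prop :=
  exists n, chi n <> 0 /\ chi n <> 1.

(* L(s,chi) = 0 for real s, via convergence of the partial sums of the
   (conditionally convergent, chi nonprincipal) Dirichlet series. *)
Definition L_zero (chi : nat -> R) (s : R) : Prop :=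
  Un_cv (fun N => sum1 (fun n => chi n * Rpower (INR n) (- s)) N) 0.

(* Exceptional (Siegel) zero for modulus q, relative to the absolute
   constant c0 of the zero-free region: a real zero beta of L(s,chi) with
   chi a real nonprincipal character mod q and 1 - c0/log q < beta < 1. *)
Definition exceptional (c0 : R) (q : nat) (chi : nat -> R) (beta : R) : Prop :=
  real_dirichlet_char q chi /\ nonprincipal chi /\
  1 - c0 / ln (INR q) < beta < 1 /\ L_zero chi beta.

Definition chiZ (chi : nat -> R) (q : nat) (a : Z) : R :=
  chi (Z.to_nat (Z.modulo a (Z.of_nat q))).

(* F(n) = Lambda(n) delta(n) - 1/phi(q) + (eps/phi(q)) n^(beta-1),
   eps = chi~(a) (eps = 0 when there is no exceptional zero). *)
Definition Fn (q : nat) (a : Z) (eps beta : R) (n : nat) : R :=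
  (if congr q a n then vonMangoldt n else 0) - 1 / phiR q
  + eps / phiR q * rpow (INR n) (beta - 1).

Definition J1 (q : nat) (a : Z) (eps beta X h : R) : R :=
  RInt (fun x => (Rabs (sum1 (fun n => Fn q a eps beta n * exp (- INR n / X))
                              (nfloor x))) ^ 2) 0 h.

Definition Hq (q : nat) (a : Z) (eps beta y : R) : R :=
  RInt (fun t => (psi t q a - t / phiR q + eps / phiR q * (rpow t beta / beta)) ^ 2)
    0 y.

(* Write A(N) = sum_{n <= N} F(n).  Partial summation against the weights
   e^{-n/X}, which lie in [0, 1] and decrease by at most 1/X per step, together
   with Cauchy-Schwarz gives
     (sum_{n <= N} F(n) e^{-n/X})^2 <= 2 A(N)^2 + (2/X) sum_{n < N} A(n)^2,
   so for h <= X the integral J is at most 4 int_0^h A(floor x)^2 dx.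
   Conversely, at every x >= 0 the integrand of H is (A(floor x) + E(x))^2 with
   |E(x)| <= 3/phi(q): the term 1/phi(q) sums to floor(x)/phi(q) rather than
   x/phi(q), and sum_{n <= N} n^(beta-1) is within 1/beta <= 2 of x^beta/beta,
   an exceptional zero having beta >= 1/2 and |chi(a)| <= 1.  Since
   (A + E)^2 >= A^2/2 - E^2, this gives H >= (1/2) int_0^h A(floor x)^2 dx
   - 9h/phi(q)^2, whence J <= 72 (H + h/phi(q)^2). *)

From Pilot Require Import Defs.
From Stdlib Require Import Reals ZArith Arith Lra Lia.
From Coquelicot Require Import Coquelicot.
Open Scope R_scope.

(* Coquelicot exports its own [nfloor] and [Fn], hence the qualified names
   [Defs.nfloor] and [Defs.Fn] below. *)

Fixpoint sum_lt (u : nat -> R) (N : nat) : R :=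
  match N with O => 0 | S m => sum_lt u m + u m end.

Lemma sum_lt_le_compat (u v : nat -> R) (N : nat) :
  (forall n, (n < N)%nat -> u n <= v n) -> sum_lt u N <= sum_lt v N.
Proof.
  induction N as [|N IH]; intros Huv; simpl; [lra|].
  assert (u N <= v N) by (apply Huv; lia).
  assert (sum_lt u N <= sum_lt v N) by (apply IH; intros; apply Huv; lia).
  lra.
Qed.

Lemma sum_lt_nonneg (u : nat -> R) (N : nat) :
  (forall n, 0 <= u n) -> 0 <= sum_lt u N.
Proof. intros Hu; induction N; simpl; [lra| specialize (Hu N); lra]. Qed.

Lemma sum_lt_le_mono (u : nat -> R) (N M : nat) :
  (forall n, 0 <= u n) -> (N <= M)%nat -> sum_lt u N <= sum_lt u M.
Proof. intros Hu HNM; induction HNM; simpl; [lra| specialize (Hu m); lra]. Qed.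

Lemma sum_lt_affine (u : nat -> R) (a b : R) (N : nat) :
  sum_lt (fun n => a * u n + b) N = a * sum_lt u N + INR N * b.
Proof. induction N; simpl sum_lt; [simpl; ring| rewrite IHN, S_INR; ring]. Qed.

Lemma sum_lt_telescope (w : nat -> R) (N : nat) :
  sum_lt (fun n => w n - w (S n)) N = w O - w N.
Proof. induction N; simpl; [ring| rewrite IHN; ring]. Qed.

Lemma sum_lt_weighted_sq_le (d y : nat -> R) (N : nat) :
  (forall n, 0 <= d n) -> sum_lt d N <= 1 ->
  (sum_lt (fun n => d n * y n) N) ^ 2 <= sum_lt (fun n => d n * y n ^ 2) N.
Proof.
  intros Hd Hsum.
  assert (Hexpand : forall mu, sum_lt (fun n => d n * (y n - mu) ^ 2) N
    = sum_lt (fun n => d n * y n ^ 2) N - 2 * mu * sum_lt (fun n => d n * y n) N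
      + mu ^ 2 * sum_lt d N).
  { intros mu; clear; induction N; cbn [sum_lt]; [ring| rewrite IHN; ring]. }
  set (mu := sum_lt (fun n => d n * y n) N).
  assert (Hvar : 0 <= sum_lt (fun n => d n * (y n - mu) ^ 2) N)
    by (apply sum_lt_nonneg; intros; apply Rmult_le_pos; [apply Hd| apply pow2_ge_0]).
  assert (0 <= sum_lt d N) by (apply sum_lt_nonneg; exact Hd).
  rewrite Hexpand in Hvar. fold mu in Hvar.
  pose proof (pow2_ge_0 mu). nra.
Qed.

Lemma sum1_affine (f g : nat -> R) (k m : R) (N : nat) :
  sum1 (fun n => f n - k + m * g n) N = sum1 f N - INR N * k + m * sum1 g N.
Proof. induction N; cbn [sum1]; [simpl; ring| rewrite IHN, S_INR; ring]. Qed.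

Lemma sum1_mul_abel (F w : nat -> R) (N : nat) :
  sum1 (fun n => F n * w n) N
  = sum1 F N * w N + sum_lt (fun n => (w n - w (S n)) * sum1 F n) N.
Proof. induction N; cbn [sum1 sum_lt]; [ring| rewrite IHN; ring]. Qed.

Section PartialSummation.
Variables (F w : nat -> R) (delta : R).
Hypothesis w_bounds : forall n, 0 <= w n <= 1.
Hypothesis w_step_bounds : forall n, 0 <= w n - w (S n) <= delta.

Lemma weighted_sum1_sq_le (N : nat) :
  (sum1 (fun n => F n * w n) N) ^ 2
  <= 2 * (sum1 F N) ^ 2 + 2 * delta * sum_lt (fun n => (sum1 F n) ^ 2) N.
Proof.
  rewrite sum1_mul_abel.
  set (tail := sum_lt (fun n => (w n - w (S n)) * sum1 F n) N).
  assert (Htail : tail ^ 2 <= delta * sum_lt (fun n => (sum1 F n) ^ 2) N).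
  { apply Rle_trans with (sum_lt (fun n => (w n - w (S n)) * sum1 F n ^ 2) N).
    - apply sum_lt_weighted_sq_le; [apply w_step_bounds|].
      rewrite sum_lt_telescope. pose proof (w_bounds O). pose proof (w_bounds N). lra.
    - replace (delta * _) with (sum_lt (fun n => delta * sum1 F n ^ 2 + 0) N)
        by (rewrite sum_lt_affine; ring).
      apply sum_lt_le_compat. intros n _.
      pose proof (w_step_bounds n). pose proof (pow2_ge_0 (sum1 F n)). nra. }
  pose proof (w_bounds N). pose proof (pow2_ge_0 (sum1 F N)).
  assert ((sum1 F N * w N) ^ 2 <= sum1 F N ^ 2).
  { replace ((sum1 F N * w N) ^ 2) with (sum1 F N ^ 2 * w N ^ 2) by ring.
    assert (w N ^ 2 <= 1) by nra. nra. }
  pose proof (pow2_ge_0 (sum1 F N * w N - tail)). nra.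
Qed.

End PartialSummation.

Lemma exp_neg_le1 (t : R) : 0 <= t -> exp (- t) <= 1.
Proof.
  intros Ht. pose proof (exp_ineq1_le t). pose proof (exp_pos (- t)).
  assert (exp (- t) * exp t = 1) by (rewrite <- exp_plus, Rplus_opp_l; apply exp_0).
  assert (exp (- t) * (exp t - 1) >= 0) by (apply Rle_ge, Rmult_le_pos; lra).
  nra.
Qed.

Section ExpWeights.
Variable X : R.
Hypothesis X_pos : 0 < X.

Lemma exp_weight_bounds (n : nat) : 0 <= exp (- INR n / X) <= 1.
Proof.
  split; [left; apply exp_pos|].
  replace (- INR n / X) with (- (INR n / X)) by (field; lra).
  apply exp_neg_le1, Rdiv_le_0_compat; [apply pos_INR| exact X_pos].
Qed.

Lemma exp_weight_step_bounds (n : nat) :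
  0 <= exp (- INR n / X) - exp (- INR (S n) / X) <= 1 / X.
Proof.
  assert (Hsplit : exp (- INR (S n) / X) = exp (- INR n / X) * exp (- (1 / X))).
  { rewrite <- exp_plus, S_INR. f_equal. field. lra. }
  rewrite Hsplit.
  pose proof (exp_weight_bounds n).
  assert (exp (- (1 / X)) <= 1) by (apply exp_neg_le1; left; apply Rdiv_lt_0_compat; lra).
  pose proof (exp_ineq1_le (- (1 / X))).
  split; nra.
Qed.

End ExpWeights.

Lemma nfloor_unique (x : R) (n : nat) : INR n <= x < INR n + 1 -> Defs.nfloor x = n.
Proof.
  intros Hx. unfold Defs.nfloor.
  assert (E : Z.of_nat n = Int_part x).
  { apply Int_part_spec. rewrite <- INR_IZR_INZ. lra. }
  rewrite <- E. apply Nat2Z.id.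
Qed.

Lemma nfloor_bounds (x : R) : 0 <= x -> INR (Defs.nfloor x) <= x < INR (Defs.nfloor x) + 1.
Proof.
  intros Hx. unfold Defs.nfloor. destruct (base_Int_part x) as [H1 H2].
  assert (Hz : (0 <= Int_part x)%Z).
  { assert (-1 < Int_part x)%Z by (apply lt_IZR; simpl IZR; lra). lia. }
  rewrite INR_IZR_INZ, Z2Nat.id by exact Hz. lra.
Qed.

Definition step_integral (u : nat -> R) (h : R) : R :=
  sum_lt u (Defs.nfloor h) + (h - INR (Defs.nfloor h)) * u (Defs.nfloor h).

Lemma is_RInt_step_unit (u : nat -> R) (n : nat) (b : R) :
  INR n <= b <= INR n + 1 ->
  is_RInt (fun x => u (Defs.nfloor x)) (INR n) b ((b - INR n) * u n).
Proof.
  intros Hb.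
  apply is_RInt_ext with (fun _ => u n); [|apply (is_RInt_const (V := R_NormedModule))].
  intros x Hx. rewrite Rmin_left in Hx by lra. rewrite Rmax_right in Hx by lra.
  rewrite (nfloor_unique x n); [reflexivity| lra].
Qed.

Lemma is_RInt_step (u : nat -> R) (h : R) :
  0 <= h -> is_RInt (fun x => u (Defs.nfloor x)) 0 h (step_integral u h).
Proof.
  intros Hh.
  assert (Hnat : forall N, is_RInt (fun x => u (Defs.nfloor x)) 0 (INR N) (sum_lt u N)).
  { induction N as [|N IH].
    - apply (is_RInt_point (V := R_NormedModule)).
    - rewrite S_INR. cbn [sum_lt].
      replace (sum_lt u N + u N) with (sum_lt u N + (INR N + 1 - INR N) * u N) by ring.
      apply (is_RInt_Chasles _ _ _ _ _ _ IH), is_RInt_step_unit. lra. }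
  pose proof (nfloor_bounds h Hh).
  apply (is_RInt_Chasles _ _ _ _ _ _ (Hnat (Defs.nfloor h))), is_RInt_step_unit. lra.
Qed.

Lemma RInt_step (u : nat -> R) (h : R) :
  0 <= h -> RInt (fun x => u (Defs.nfloor x)) 0 h = step_integral u h.
Proof. intros Hh. apply is_RInt_unique, is_RInt_step, Hh. Qed.

Lemma step_integral_le (u v : nat -> R) (h : R) : 0 <= h ->
  (forall n, (n <= Defs.nfloor h)%nat -> u n <= v n) -> step_integral u h <= step_integral v h.
Proof.
  intros Hh Huv. pose proof (nfloor_bounds h Hh). unfold step_integral.
  assert (sum_lt u (Defs.nfloor h) <= sum_lt v (Defs.nfloor h))
    by (apply sum_lt_le_compat; intros; apply Huv; lia).
  assert (u (Defs.nfloor h) <= v (Defs.nfloor h)) by (apply Huv; lia).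
  nra.
Qed.

Lemma step_integral_affine (u : nat -> R) (a b h : R) :
  step_integral (fun n => a * u n + b) h = a * step_integral u h + h * b.
Proof. unfold step_integral. rewrite sum_lt_affine. ring. Qed.

Lemma ex_RInt_of_unit_pieces (f : R -> R) (h : R) :
  (forall n : nat, ex_RInt f (INR n) (INR n + 1)) -> 0 <= h -> ex_RInt f 0 h.
Proof.
  intros Hpiece Hh.
  assert (Hnat : forall N, ex_RInt f 0 (INR N)).
  { induction N as [|N IH]; [apply ex_RInt_point|].
    rewrite S_INR. exact (ex_RInt_Chasles _ _ _ _ IH (Hpiece N)). }
  pose proof (nfloor_bounds h Hh).
  apply (ex_RInt_Chasles _ _ _ _ (Hnat (Defs.nfloor h))).
  apply (ex_RInt_Chasles_1 (V := R_CompleteNormedModule) _ _ _ (INR (Defs.nfloor h) + 1));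
    [lra| apply Hpiece].
Qed.

Lemma step_integral_le_of_partial_sums (u v : nat -> R) (delta h : R) :
  0 <= h -> 0 <= delta -> h * delta <= 1 -> (forall n, 0 <= v n) ->
  (forall n, u n <= 2 * v n + 2 * delta * sum_lt v n) ->
  step_integral u h <= 4 * step_integral v h.
Proof.
  intros Hh Hdelta Hhdelta Hv Hu.
  set (P := sum_lt v (Defs.nfloor h)).
  assert (HP : 0 <= P) by (apply sum_lt_nonneg, Hv).
  assert (HPT : P <= step_integral v h).
  { pose proof (nfloor_bounds h Hh). pose proof (Hv (Defs.nfloor h)).
    unfold step_integral. fold P. nra. }
  apply Rle_trans with (step_integral (fun n => 2 * v n + 2 * delta * P) h).
  - apply step_integral_le; [exact Hh|]. intros n Hn.
    pose proof (Hu n).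
    assert (delta * sum_lt v n <= delta * P)
      by (apply Rmult_le_compat_l; [exact Hdelta| exact (sum_lt_le_mono _ _ _ Hv Hn)]).
    lra.
  - rewrite step_integral_affine. nra.
Qed.

Lemma rpow_pos (x b : R) : 0 < x -> rpow x b = Rpower x b.
Proof. intros Hx. unfold rpow. destruct (Rle_dec x 0); [lra| reflexivity]. Qed.

Lemma rpow_nonpos (x b : R) : x <= 0 -> rpow x b = 0.
Proof. intros Hx. unfold rpow. destruct (Rle_dec x 0); [reflexivity| lra]. Qed.

Lemma rpow_nonneg (x b : R) : 0 <= rpow x b.
Proof. unfold rpow. destruct (Rle_dec x 0); [apply Rle_refl| left; apply exp_pos]. Qed.

Lemma rpow_le_compat (x y b : R) : 0 <= b -> 0 <= x <= y -> rpow x b <= rpow y b.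
Proof.
  intros Hb Hxy. destruct (Req_dec x 0) as [->|Hx0].
  - rewrite rpow_nonpos by lra. apply rpow_nonneg.
  - rewrite !rpow_pos by lra. apply Rle_Rpower_l; lra.
Qed.

Lemma rpow_continuous (b : R) (x : R) : 0 < b -> continuous (fun t => rpow t b) x.
Proof.
  intros Hb. apply continuity_pt_filterlim.
  destruct (Rtotal_order x 0) as [Hx|[->|Hx]].
  - apply continuity_pt_locally_ext with (fun _ => 0) (- x);
      [lra| |apply continuity_pt_const; now intros ? ?].
    intros y Hy. unfold Rdist in Hy. apply Rabs_def2 in Hy. rewrite rpow_nonpos; lra.
  - intros eps Heps. exists (Rpower eps (/ b)). split; [apply exp_pos|].
    intros y [_ Hy]. simpl in *. unfold Rdist in *.
    rewrite (rpow_nonpos 0) by lra. rewrite Rminus_0_r in *.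
    destruct (Rle_or_lt y 0) as [Hy0|Hy0].
    + rewrite rpow_nonpos, Rabs_R0 by lra. exact Heps.
    + rewrite rpow_pos, Rabs_pos_eq by (try left; try apply exp_pos; lra).
      rewrite Rabs_pos_eq in Hy by lra.
      replace eps with (Rpower (Rpower eps (/ b)) b)
        by (rewrite Rpower_mult, Rinv_l, Rpower_1; lra).
      apply Rlt_Rpower_l; lra.
  - apply continuity_pt_locally_ext with (fun t => Rpower t b) x; [lra| |].
    + intros y Hy. unfold Rdist in Hy. apply Rabs_def2 in Hy. rewrite rpow_pos; lra.
    + apply derivable_continuous_pt. exists (b * Rpower x (b - 1)).
      apply derivable_pt_lim_power; lra.
Qed.

Lemma Rpower_base_1 (b : R) : Rpower 1 b = 1.
Proof. unfold Rpower. rewrite ln_1, Rmult_0_r. apply exp_0. Qed.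

Lemma Rpower_succ_sub_bounds (b k : R) : 0 < b < 1 -> 0 < k ->
  b * Rpower (k + 1) (b - 1) <= Rpower (k + 1) b - Rpower k b <= b * Rpower k (b - 1).
Proof.
  intros Hb Hk.
  destruct (MVT_cor2 (fun x => Rpower x b) (fun x => b * Rpower x (b - 1)) k (k + 1))
    as [c [Hmvt Hc]]; [lra| intros c Hc; apply derivable_pt_lim_power; lra|].
  rewrite Hmvt, Rplus_minus_l, Rmult_1_r.
  assert (Hdecr : forall x y, 0 < x <= y -> Rpower y (b - 1) <= Rpower x (b - 1)).
  { intros x y Hxy.
    replace (b - 1) with (- (1 - b)) by ring. rewrite !Rpower_Ropp.
    apply Rinv_le_contravar; [apply exp_pos| apply Rle_Rpower_l; lra]. }
  split; apply Rmult_le_compat_l; try lra; apply Hdecr; lra.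
Qed.

Definition power_sum (b : R) (N : nat) : R := sum1 (fun n => rpow (INR n) (b - 1)) N.

Lemma power_sum_upper (b : R) (N : nat) : 0 < b < 1 -> b * power_sum b N <= rpow (INR N) b.
Proof.
  intros Hb. unfold power_sum. induction N as [|N IH].
  - simpl. rewrite rpow_nonpos by lra. lra.
  - cbn [sum1]. rewrite S_INR, !(rpow_pos (INR N + 1)) by (pose proof (pos_INR N); lra).
    destruct N as [|M].
    + cbn [sum1 INR]. rewrite !Rplus_0_l, !Rpower_base_1. lra.
    + rewrite rpow_pos in IH by (apply lt_0_INR; lia).
      pose proof (Rpower_succ_sub_bounds b (INR (S M)) Hb ltac:(apply lt_0_INR; lia)).
      lra.
Qed.

Lemma power_sum_lower (b : R) (N : nat) : 0 < b < 1 -> rpow (INR N + 1) b - 1 <= b * power_sum b N.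
Proof.
  intros Hb. unfold power_sum. induction N as [|N IH].
  - cbn [sum1 INR]. rewrite Rplus_0_l, rpow_pos, Rpower_base_1 by lra. lra.
  - cbn [sum1]. rewrite S_INR, !rpow_pos in * by (pose proof (pos_INR N); lra).
    pose proof (Rpower_succ_sub_bounds b (INR N + 1) Hb ltac:(pose proof (pos_INR N); lra)).
    lra.
Qed.

Lemma power_sum_approx (b x : R) : 0 < b < 1 -> 0 <= x ->
  0 <= rpow x b / b - power_sum b (Defs.nfloor x) <= 1 / b.
Proof.
  intros Hb Hx. pose proof (nfloor_bounds x Hx).
  set (N := Defs.nfloor x) in *.
  pose proof (power_sum_upper b N Hb). pose proof (power_sum_lower b N Hb).
  pose proof (rpow_le_compat (INR N) x b ltac:(lra) ltac:(pose proof (pos_INR N); lra)).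
  pose proof (rpow_le_compat x (INR N + 1) b ltac:(lra) ltac:(lra)).
  assert (Hdiv : rpow x b / b - power_sum b N = (rpow x b - b * power_sum b N) / b)
    by (field; lra).
  rewrite Hdiv. split.
  - apply Rdiv_le_0_compat; lra.
  - apply Rmult_le_compat_r; [left; apply Rinv_0_lt_compat; lra| lra].
Qed.

Lemma periodic_abs_le_sum (f : nat -> R) (q : nat) : (1 <= q)%nat ->
  (forall n, f (n + q)%nat = f n) ->
  forall n, Rabs (f n) <= sum_lt (fun i => Rabs (f i)) q.
Proof.
  intros Hq Hper.
  assert (Hmod : forall n, f n = f (n mod q)).
  { intros n. rewrite (Nat.div_mod_eq n q) at 1.
    generalize (n / q)%nat as k. induction k as [|k IH].
    - now rewrite Nat.mul_0_r, Nat.add_0_l.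
    - replace (q * S k + n mod q)%nat with (q * k + n mod q + q)%nat by lia.
      rewrite Hper. exact IH. }
  assert (Hsmall : forall i N, (i < N)%nat -> Rabs (f i) <= sum_lt (fun i => Rabs (f i)) N).
  { intros i N Hi. induction Hi as [|N Hi IH]; cbn [sum_lt].
    - pose proof (sum_lt_nonneg (fun i => Rabs (f i)) i (fun j => Rabs_pos (f j))). lra.
    - pose proof (Rabs_pos (f N)). lra. }
  intros n. rewrite Hmod. apply Hsmall, Nat.mod_upper_bound. lia.
Qed.

Lemma multiplicative_bounded_abs_le1 (f : nat -> R) (B : R) :
  (forall m n, f (m * n)%nat = f m * f n) -> (forall n, Rabs (f n) <= B) ->
  forall n, Rabs (f n) <= 1.
Proof.
  intros Hmul Hbound n.
  destruct (Rle_or_lt (Rabs (f n)) 1) as [Hle|Hgt]; [exact Hle|].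
  assert (Hpow : forall k, f (n ^ S k)%nat = f n ^ S k).
  { induction k as [|k IH]; [simpl; rewrite Nat.mul_1_r; ring|].
    rewrite Nat.pow_succ_r', Hmul, IH. reflexivity. }
  destruct (Pow_x_infinity (f n) Hgt (B + 1)) as [K HK].
  specialize (HK (S K) (Nat.le_succ_diag_r K)).
  rewrite <- Hpow in HK. specialize (Hbound (n ^ S K)%nat). lra.
Qed.

Lemma real_dirichlet_char_abs_le1 (q : nat) (chi : nat -> R) :
  (1 <= q)%nat -> real_dirichlet_char q chi -> forall n, Rabs (chi n) <= 1.
Proof.
  intros Hq [Hmul [_ [Hper _]]].
  exact (multiplicative_bounded_abs_le1 chi _ Hmul (periodic_abs_le_sum chi q Hq Hper)).
Qed.

Lemma exceptional_zero_bounds (c0 : R) (q : nat) (chi : nat -> R) (beta : R) :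
  0 < c0 <= 1 / 4 -> exceptional c0 q chi beta -> 1 / 2 <= beta < 1.
Proof.
  intros Hc0 [_ [_ [[Hlow Hup] _]]]. split; [|exact Hup].
  (* For q <= 1, ln q = 0 and c0 / 0 = 0, so the hypothesis reads 1 < beta. *)
  destruct (le_lt_dec q 1) as [Hq|Hq].
  - assert (Hln : ln (INR q) = 0).
    { destruct q as [|[|q]]; [| apply ln_1| lia].
      unfold ln. destruct (Rlt_dec 0 (INR 0)) as [H0|];
        [destruct (Rlt_irrefl 0 H0)| reflexivity]. }
    rewrite Hln, Rdiv_0_r in Hlow. lra.
  - assert (Hln : / 2 < ln (INR q)).
    { apply Rlt_le_trans with (ln 2); [exact ln_lt_2|].
      apply ln_le; [lra|]. apply le_INR in Hq. simpl in Hq. lra. }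
    assert (c0 / ln (INR q) <= 1 / 2).
    { apply Rmult_le_reg_r with (ln (INR q)); [lra|].
      unfold Rdiv. rewrite Rmult_assoc, Rinv_l by lra. lra. }
    lra.
Qed.

Lemma smoothed_sum_sq_integral_le (F : nat -> R) (X h : R) : 0 < X -> 0 <= h <= X ->
  RInt (fun x => (Rabs (sum1 (fun n => F n * exp (- INR n / X)) (Defs.nfloor x))) ^ 2) 0 h
  <= 4 * step_integral (fun N => (sum1 F N) ^ 2) h.
Proof.
  intros HX Hh.
  set (u := fun N => (sum1 (fun n => F n * exp (- INR n / X)) N) ^ 2).
  rewrite (RInt_ext _ (fun x => u (Defs.nfloor x))) by (intros; apply pow2_abs).
  rewrite RInt_step by lra.
  apply step_integral_le_of_partial_sums with (1 / X).
  - lra.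
  - left; apply Rdiv_lt_0_compat; lra.
  - apply Rmult_le_reg_r with X; [exact HX|]. field_simplify; lra.
  - intros n; apply pow2_ge_0.
  - intros N. apply weighted_sum1_sq_le;
      [apply exp_weight_bounds | apply exp_weight_step_bounds]; exact HX.
Qed.

Definition vonMangoldt_in_class (q : nat) (a : Z) (m : nat) : R :=
  if congr q a m then vonMangoldt m else 0.

(* [eps] is 0 when there is no exceptional zero, and chi~(a) otherwise. *)
Definition twist_bounded (eps beta : R) : Prop :=
  eps = 0 \/ (1 / 2 <= beta < 1 /\ Rabs eps <= 1).

Lemma twist_continuous (eps beta x : R) :
  twist_bounded eps beta -> continuous (fun t => eps * (rpow t beta / beta)) x.
Proof.
  intros [->|[Hbeta _]].
  - apply (continuous_ext (fun _ => 0));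
      [intros t; symmetry; apply Rmult_0_l| apply continuous_const].
  - apply (continuous_mult (fun _ => eps)); [apply continuous_const|].
    apply (continuous_mult (fun t => rpow t beta) (fun _ => / beta));
      [apply rpow_continuous; lra| apply continuous_const].
Qed.

Lemma twist_error_bound (eps beta x : R) : twist_bounded eps beta -> 0 <= x ->
  Rabs (eps * (rpow x beta / beta - power_sum beta (Defs.nfloor x))) <= 2.
Proof.
  intros [->|[Hbeta Heps]] Hx.
  - rewrite Rmult_0_l, Rabs_R0. lra.
  - pose proof (power_sum_approx beta x ltac:(lra) Hx) as Happrox.
    assert (1 / beta <= 2).
    { apply Rmult_le_reg_r with beta; [lra|]. field_simplify; lra. }
    rewrite Rabs_mult, (Rabs_pos_eq (_ - _)) by lra.
    pose proof (Rabs_pos eps). nra.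
Qed.

Lemma sq_add_ge (a e : R) : a ^ 2 / 2 - e ^ 2 <= (a + e) ^ 2.
Proof. pose proof (pow2_ge_0 (a + 2 * e)). nra. Qed.

Section ArithmeticProgression.
Variables (q : nat) (a : Z) (eps beta : R).
Hypothesis phi_pos : 0 < phiR q.
Hypothesis twist : twist_bounded eps beta.

Let Hq_integrand (t : R) : R :=
  (psi t q a - t / phiR q + eps / phiR q * (rpow t beta / beta)) ^ 2.

Lemma sum1_Fn (N : nat) :
  sum1 (Defs.Fn q a eps beta) N
  = sum1 (vonMangoldt_in_class q a) N - INR N * (1 / phiR q) + eps / phiR q * power_sum beta N.
Proof. apply sum1_affine. Qed.

Lemma Hq_integrand_ge (x : R) : 0 <= x ->
  (sum1 (Defs.Fn q a eps beta) (Defs.nfloor x)) ^ 2 / 2 - 9 / phiR q ^ 2 <= Hq_integrand x.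
Proof.
  intros Hx. pose proof (nfloor_bounds x Hx) as Hfloor.
  set (N := Defs.nfloor x) in *.
  set (k := / phiR q).
  set (dev := INR N - x + eps * (rpow x beta / beta - power_sum beta N)).
  assert (Hsplit : Hq_integrand x = (sum1 (Defs.Fn q a eps beta) N + dev * k) ^ 2).
  { unfold Hq_integrand, psi, dev, k. rewrite sum1_Fn. fold N.
    unfold vonMangoldt_in_class, Rdiv. ring. }
  assert (Hdev : dev ^ 2 <= 9).
  { pose proof (twist_error_bound eps beta x twist Hx) as Htw. fold N in Htw.
    apply Rabs_le_between in Htw. unfold dev. nra. }
  replace (9 / phiR q ^ 2) with (9 * k ^ 2) by (unfold k; field; lra).
  rewrite Hsplit.
  assert ((dev * k) ^ 2 <= 9 * k ^ 2).
  { replace ((dev * k) ^ 2) with (dev ^ 2 * k ^ 2) by ring.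
    apply Rmult_le_compat_r; [apply pow2_ge_0| exact Hdev]. }
  pose proof (sq_add_ge (sum1 (Defs.Fn q a eps beta) N) (dev * k)). lra.
Qed.

Lemma ex_RInt_Hq_integrand (h : R) : 0 <= h -> ex_RInt Hq_integrand 0 h.
Proof.
  intros Hh. apply ex_RInt_of_unit_pieces; [|exact Hh]. intros n.
  set (L := sum1 (vonMangoldt_in_class q a) n).
  apply (ex_RInt_ext (fun t => (L - t / phiR q + / phiR q * (eps * (rpow t beta / beta))) ^ 2)).
  - intros t Ht. rewrite Rmin_left in Ht by lra. rewrite Rmax_right in Ht by lra.
    unfold Hq_integrand, psi. rewrite (nfloor_unique t n) by lra.
    unfold L, vonMangoldt_in_class, Rdiv.
    (* The equation lives in Coquelicot's normed-module carrier, unknown to [ring]. *)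
    match goal with |- ?lhs = ?rhs => change (@eq R lhs rhs) end. ring.
  - apply (ex_RInt_continuous (V := R_CompleteNormedModule)). intros t _.
    apply (continuous_comp _ (fun y => y ^ 2)).
    + apply (continuous_plus (fun t => L - t / phiR q)).
      * apply (continuous_minus (fun _ => L)); [apply continuous_const|].
        apply (continuous_mult (fun t => t) (fun _ => / phiR q));
          [apply continuous_id| apply continuous_const].
      * apply (continuous_mult (fun _ => / phiR q)); [apply continuous_const|].
        apply twist_continuous, twist.
    + apply continuity_pt_filterlim, derivable_continuous_pt, derivable_pt_pow.
Qed.

Lemma Hq_lower_bound (h : R) : 0 <= h ->
  step_integral (fun N => (sum1 (Defs.Fn q a eps beta) N) ^ 2) h / 2 - 9 * h / phiR q ^ 2
  <= Hq q a eps beta h.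
Proof.
  intros Hh.
  set (v := fun N => (sum1 (Defs.Fn q a eps beta) N) ^ 2).
  set (w := fun N => 1 / 2 * v N + - (9 / phiR q ^ 2)).
  replace (step_integral v h / 2 - 9 * h / phiR q ^ 2) with (step_integral w h)
    by (unfold w; rewrite step_integral_affine; field; lra).
  rewrite <- RInt_step by exact Hh.
  change (Hq q a eps beta h) with (RInt Hq_integrand 0 h).
  apply RInt_le; [exact Hh| eexists; apply is_RInt_step, Hh| apply ex_RInt_Hq_integrand, Hh|].
  intros x Hx. unfold w, v. pose proof (Hq_integrand_ge x ltac:(lra)). lra.
Qed.

Lemma Hq_nonneg (h : R) : 0 <= h -> 0 <= Hq q a eps beta h.
Proof.
  intros Hh. apply RInt_ge_0; [exact Hh| apply ex_RInt_Hq_integrand, Hh|].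
  intros; apply pow2_ge_0.
Qed.

Lemma J1_le_Hq (X h : R) : 0 < X -> 0 <= h <= X ->
  J1 q a eps beta X h <= 72 * (Hq q a eps beta h + h / phiR q ^ 2).
Proof.
  intros HX Hh.
  pose proof (smoothed_sum_sq_integral_le (Defs.Fn q a eps beta) X h HX Hh) as HJ.
  pose proof (Hq_lower_bound h ltac:(lra)).
  pose proof (Hq_nonneg h ltac:(lra)).
  unfold J1.
  assert (0 <= h / phiR q ^ 2) by (apply Rdiv_le_0_compat; [lra| apply pow_lt; exact phi_pos]).
  unfold Rdiv in *. lra.
Qed.

End ArithmeticProgression.

Lemma phiR_pos (q : nat) : (1 <= q)%nat -> 0 < phiR q.
Proof.
  intros Hq. apply lt_0_INR.
  pose proof (prime.totient_gt0 q) as Htot.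
  destruct (@ssrnat.leP 1 q) as [_|]; [|lia].
  destruct (@ssrnat.leP 1 (prime.totient q)) as [Hpos|]; [exact Hpos| discriminate].
Qed.

Theorem lemma4p2 :
  forall c0 : R, 0 < c0 <= 1 / 4 ->
  exists C : R, 0 < C /\
  forall (q : nat) (a : Z) (X h : R),
    (1 <= q)%nat -> Z.gcd a (Z.of_nat q) = 1%Z -> 2 <= X -> 1 <= h <= X ->
    ((~ exists (chi : nat -> R) (beta : R), exceptional c0 q chi beta) ->
       J1 q a 0 0 X h <= C * (Hq q a 0 0 h + h / (phiR q) ^ 2)) /\
    (forall (chi : nat -> R) (beta : R), exceptional c0 q chi beta ->
       J1 q a (chiZ chi q a) beta X h
         <= C * (Hq q a (chiZ chi q a) beta h + h / (phiR q) ^ 2)).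
Proof.
  intros c0 Hc0. exists 72. split; [lra|].
  intros q a X h Hq _ HX Hh.
  pose proof (phiR_pos q Hq) as Hphi.
  split.
  - intros _. apply J1_le_Hq; [exact Hphi| left; reflexivity| lra| lra].
  - intros chi beta Hexc. apply J1_le_Hq; [exact Hphi| right| lra| lra].
    split; [exact (exceptional_zero_bounds c0 q chi beta Hc0 Hexc)|].
    destruct Hexc as [Hchar _].
    exact (real_dirichlet_char_abs_le1 q chi Hq Hchar _).
Qed.
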